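(* Let $\phi\colon F\to G$ and $\psi\colon G\to H$ be transformations (of types $|\alpha|\xrightarrow{\sigma}n\xleftarrow{\tau}|\beta|$ and $|\beta|\xrightarrow{\eta}m\xleftarrow{\theta}|\gamma|$, with $F\colon\mathbb B^\alpha\to\mathbb C$, $G\colon\mathbb B^\beta\to\mathbb C$, $H\colon\mathbb B^\gamma\to\mathbb C$) which are dinatural in all their variables. If the composite graph $\Gamma(\psi)\circ\Gamma(\phi)$ is acyclic, then $\psi\circ\phi$ is dinatural in all its variables.
   Context: Notation: for $k\in\mathbb N$, $k$ also denotes $\{1,\dots,k\}$. For $\alpha\in\{+,-\}^*$, $\mathbb B^\alpha=\mathbb B^{\alpha_1}\times\cdots\times\mathbb B^{\alpha_{|\alpha|}}$ with $\mathbb B^+=\mathbb B$, $\mathbb B^-=\mathbb B^{op}$. For $\mathbf A=(A_1,\dots,A_n)$ and $\sigma\colon k\to n$, $\mathbf A\sigma=(A_{\sigma1},\dots,A_{\sigma k})$. A morphism $f\colon A\to B$ placed in a contravariant argument is regarded as a morphism $B\to A$ of $\mathbb B^{op}$. A transformation $\phi\colon F\to G$ of type $|\alpha|\xrightarrow{\sigma}n\xleftarrow{\tau}|\beta|$ ($\sigma,\tau$ arbitrary functions) is a family $\phi_{\mathbf A}\colon F(\mathbf A\sigma)\to G(\mathbf A\tau)$, $\mathbf A\in\mathrm{Ob}(\mathbb B)^n$; $A_i$ is its $i$-th variable. $\mathbf A[X,Y/i]\sigma$ is the tuple whose $j$-th entry is $X$ if $\sigma j=i,\alpha_j=-$, $Y$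 if $\sigma j=i,\alpha_j=+$, and $A_{\sigma j}$ (or $1_{A_{\sigma j}}$ when $X,Y$ are morphisms) otherwise; $\mathbf A[X/i]=\mathbf A[X,X/i]$. $\phi$ is dinatural in its $i$-th variable if for all objects $A_j$ ($j\neq i$) and all $f\colon A\to B$: $G(\mathbf A[A,f/i]\tau)\circ\phi_{\mathbf A[A/i]}\circ F(\mathbf A[f,A/i]\sigma)=G(\mathbf A[f,B/i]\tau)\circ\phi_{\mathbf A[B/i]}\circ F(\mathbf A[B,f/i]\sigma)$. Vertical composite: with $\zeta\colon n\to l$, $\xi\colon m\to l$ a pushout of $\tau,\eta$ in finite sets, $\psi\circ\phi$ has type $|\alpha|\xrightarrow{\zeta\sigma}l\xleftarrow{\xi\theta}|\gamma|$ and components $(\psi\circ\phi)_{\mathbf A}=\psi_{\mathbf A\xi}\circ\phi_{\mathbf A\zeta}$. Composite graph $\Gamma(\psi)\circ\Gamma(\phi)$: directed bipartite graph with places the disjoint union of $|\alpha|,|\beta|,|\gamma|$ and transitions $n\sqcup m$. For $t\in n$: arc from place $j$ of the $\alpha$-block to $t$ iff $\sigma j=t,\alpha_j=+$; from $t$ to it iff $\sigma j=t,\alpha_j=-$; arc from place $j$ of the $\beta$-block to $t$ iff $\tau j=t,\beta_j=-$; from $t$ to it iff $\tau j=t,\beta_j=+$. For $t\in m$: arc from place $j$ of the $\beta$-block to $t$ iff $\eta j=t,\beta_j=+$; from $t$ to it iff $\eta j=t,\beta_j=-$; arc from place $j$ of the $\gamma$-block to $t$ iff $\theta j=t,\gamma_j=-$;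 from $t$ to it iff $\theta j=t,\gamma_j=+$. Acyclic means without directed cycles. *)

From mathcomp Require Import all_boot.
Set Implicit Arguments. Unset Strict Implicit. Unset Printing Implicit Defensive.

Record Cat := {
  ob :> Type;
  hom : ob -> ob -> Type;
  idm : forall x, hom x x;
  cmp : forall x y z, hom y z -> hom x y -> hom x z;
  cmp_idl : forall x y (f : hom x y), cmp (idm y) f = f;
  cmp_idr : forall x y (f : hom x y), cmp f (idm x) = f;
  cmp_assoc : forall x y z w (h : hom z w) (g : hom y z) (f : hom x y),
      cmp h (cmp g f) = cmp (cmp h g) f }.
Arguments hom {c}.
Arguments idm {c} x.
Arguments cmp {c x y z}.

(* Variance: true = '+', false = '-'.  A morphism X -> Y of B^c. *)
Definition mhom (B : Cat) (c : bool) (x y : B) : Type :=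
  if c then hom x y else hom y x.
Arguments mhom : clear implicits.

Definition mid (B : Cat) (c : bool) (x : B) : mhom B c x x :=
  match c as c0 return mhom B c0 x x with true => idm x | false => idm x end.
Arguments mid : clear implicits.

Definition mcomp (B : Cat) (c : bool) (x y z : B) :
  mhom B c y z -> mhom B c x y -> mhom B c x z :=
  match c as c0 return mhom B c0 y z -> mhom B c0 x y -> mhom B c0 x z with
  | true => fun g f => cmp g f
  | false => fun g f => cmp f g
  end.

Definition mcast (B : Cat) (c : bool) (x y : B) (e : x = y) : mhom B c x y :=
  match e in _ = y0 return mhom B c x y0 with erefl => mid B c x end.
Arguments mcast : clear implicits.
Arguments mcast B c {x y}.

(* morphisms of B^alpha = B^{alpha_1} x ... x B^{alpha_k} *)
Definition vhom (B : Cat) (k : nat) (alpha : 'I_k -> bool) (S T : 'I_k -> B) :=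
  forall j : 'I_k, mhom B (alpha j) (S j) (T j).

Record MFunctor (B C : Cat) (k : nat) (alpha : 'I_k -> bool) := {
  fob :> ('I_k -> B) -> C;
  fmor : forall S T, vhom alpha S T -> hom (fob S) (fob T);
  fmor_id : forall S, fmor (fun j => mid B (alpha j) (S j)) = idm (fob S);
  fmor_comp : forall S T U (g : vhom alpha T U) (f : vhom alpha S T),
      fmor (fun j => mcomp (g j) (f j)) = cmp (fmor g) (fmor f) }.
Arguments fmor {B C k alpha} m {S T}.

Definition trans (B C : Cat) (a b n : nat) (alpha : 'I_a -> bool)
  (beta : 'I_b -> bool) (F : MFunctor B C alpha) (G : MFunctor B C beta)
  (sigma : 'I_a -> 'I_n) (tau : 'I_b -> 'I_n) :=
  forall A : 'I_n -> B, hom (F (fun j => A (sigma j))) (G (fun j => A (tau j))).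

Definition substn (B : Cat) (n : nat) (A : 'I_n -> B) (i : 'I_n) (X : B) :
  'I_n -> B := fun k => if k == i then X else A k.

(* A[X,Y/i]sigma  is  subst_ob sigma alpha A i (fun c => if c then Y else X):
   entry j is Z (alpha j) if sigma j = i, and A (sigma j) otherwise. *)
Definition subst_ob (B : Cat) (k n : nat) (sigma : 'I_k -> 'I_n)
  (alpha : 'I_k -> bool) (A : 'I_n -> B) (i : 'I_n) (Z : bool -> B) :
  'I_k -> B := fun j => if sigma j == i then Z (alpha j) else A (sigma j).

(* A[u,v/i]sigma : morphism from subst_ob .. Zs to subst_ob .. Zt, with
   u : Zt false -> Zs false (contravariant slots, a morphism of B^op
   from Zs false to Zt false) and v : Zs true -> Zt true (covariant slots);
   identities elsewhere. *)
Definition subst_mor (B : Cat) (k n : nat) (sigma : 'I_k -> 'I_n)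
  (alpha : 'I_k -> bool) (A : 'I_n -> B) (i : 'I_n) (Zs Zt : bool -> B)
  (u : hom (Zt false) (Zs false)) (v : hom (Zs true) (Zt true)) :
  vhom alpha (subst_ob sigma alpha A i Zs) (subst_ob sigma alpha A i Zt) :=
  fun j =>
  match sigma j == i as e return
    mhom B (alpha j) (if e then Zs (alpha j) else A (sigma j))
                     (if e then Zt (alpha j) else A (sigma j)) with
  | true => match alpha j as c return mhom B c (Zs c) (Zt c) with
            | true => v | false => u end
  | false => mid B (alpha j) (A (sigma j))
  end.
Arguments subst_mor {B k n} sigma alpha A i Zs Zt u v.

(* dinaturality in the i-th variable:
   G(A[X,f/i]tau) o phi_{A[X/i]} o F(A[f,X/i]sigma)
   = G(A[f,Y/i]tau) o phi_{A[Y/i]} o F(A[Y,f/i]sigma)   for f : X -> Y *)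
Definition dinatural_in (B C : Cat) (a b n : nat) (alpha : 'I_a -> bool)
  (beta : 'I_b -> bool) (F : MFunctor B C alpha) (G : MFunctor B C beta)
  (sigma : 'I_a -> 'I_n) (tau : 'I_b -> 'I_n) (phi : trans F G sigma tau)
  (i : 'I_n) : Prop :=
  forall (A : 'I_n -> B) (X Y : B) (f : hom X Y),
    cmp (fmor G (subst_mor tau beta A i (fun _ => X)
                  (fun c => if c then Y else X) (idm X) f))
      (cmp (phi (substn A i X))
         (fmor F (subst_mor sigma alpha A i (fun c => if c then X else Y)
                   (fun _ => X) f (idm X))))
    =
    cmp (fmor G (subst_mor tau beta A i (fun _ => Y)
                  (fun c => if c then Y else X) f (idm Y)))
      (cmp (phi (substn A i Y))
         (fmor F (subst_mor sigma alpha A i (fun c => if c then X else Y)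
                   (fun _ => Y) (idm Y) f))).

Definition dinatural (B C : Cat) (a b n : nat) (alpha : 'I_a -> bool)
  (beta : 'I_b -> bool) (F : MFunctor B C alpha) (G : MFunctor B C beta)
  (sigma : 'I_a -> 'I_n) (tau : 'I_b -> 'I_n) (phi : trans F G sigma tau) :
  Prop := forall i : 'I_n, dinatural_in phi i.

Record isPushout (b n m l : nat) (tau : 'I_b -> 'I_n) (eta : 'I_b -> 'I_m)
  (zeta : 'I_n -> 'I_l) (xi : 'I_m -> 'I_l) : Prop := {
  po_comm : forall j, zeta (tau j) = xi (eta j);
  po_univ : forall (K : finType) (p : 'I_n -> K) (q : 'I_m -> K),
    (forall j, p (tau j) = q (eta j)) ->
    exists u : 'I_l -> K,
      [/\ forall t, u (zeta t) = p t, forall t, u (xi t) = q t &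
          forall u' : 'I_l -> K, (forall t, u' (zeta t) = p t) ->
             (forall t, u' (xi t) = q t) -> forall x, u' x = u x] }.

(* vertical composite psi o phi : components psi_{A xi} o phi_{A zeta}
   (the identification G(A zeta tau) = G(A xi eta) is made via G applied to
   identity morphisms coming from zeta o tau = xi o eta). *)
Definition vcomp (B C : Cat) (a b c n m l : nat) (alpha : 'I_a -> bool)
  (beta : 'I_b -> bool) (gamma : 'I_c -> bool)
  (F : MFunctor B C alpha) (G : MFunctor B C beta) (H : MFunctor B C gamma)
  (sigma : 'I_a -> 'I_n) (tau : 'I_b -> 'I_n)
  (eta : 'I_b -> 'I_m) (theta : 'I_c -> 'I_m)
  (zeta : 'I_n -> 'I_l) (xi : 'I_m -> 'I_l)
  (hcomm : forall j, zeta (tau j) = xi (eta j))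
  (phi : trans F G sigma tau) (psi : trans G H eta theta) :
  trans F H (fun j => zeta (sigma j)) (fun j => xi (theta j)) :=
  fun A => cmp (psi (fun k => A (xi k)))
     (cmp (fmor G (fun j => mcast B (beta j) (f_equal A (hcomm j))))
          (phi (fun k => A (zeta k)))).

(* The composite graph Gamma(psi) o Gamma(phi): places alpha-, beta-,
   gamma-blocks, transitions n + m. *)
Definition cg_vertex (a b c n m : nat) : finType :=
  (('I_a + 'I_b) + 'I_c + ('I_n + 'I_m))%type.

Definition cg_edge (a b c n m : nat) (alpha : 'I_a -> bool)
  (beta : 'I_b -> bool) (gamma : 'I_c -> bool)
  (sigma : 'I_a -> 'I_n) (tau : 'I_b -> 'I_n)
  (eta : 'I_b -> 'I_m) (theta : 'I_c -> 'I_m) : rel (cg_vertex a b c n m) :=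
  fun v w =>
  match v, w with
  | inl (inl (inl j)), inr (inl t) => (sigma j == t) && alpha j
  | inr (inl t), inl (inl (inl j)) => (sigma j == t) && ~~ alpha j
  | inl (inl (inr j)), inr (inl t) => (tau j == t) && ~~ beta j
  | inr (inl t), inl (inl (inr j)) => (tau j == t) && beta j
  | inl (inl (inr j)), inr (inr t) => (eta j == t) && beta j
  | inr (inr t), inl (inl (inr j)) => (eta j == t) && ~~ beta j
  | inl (inr j), inr (inr t) => (theta j == t) && ~~ gamma j
  | inr (inr t), inl (inr j) => (theta j == t) && gamma j
  | _, _ => false
  end.

Definition acyclic (T : finType) (e : rel T) : Prop :=
  forall v w, e v w -> ~~ connect e w v.

(* Fix a variable [i] of psi o phi and an arrow [f : X -> Y].  Every variable
   of phi and of psi lying over [i] is placed at level X or Y; such a state is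
   coherent when each slot of G admits an arrow (in the poset X <= Y spanned
   by [f]) from the level of its phi-variable to that of its psi-variable,
   and psi o phi can then be "staged" through the state by inserting those
   arrows.  The two sides of the dinaturality equation of psi o phi in [i]
   are the stagings of the all-X and all-Y states ([side_as_staged]).  By
   dinaturality of phi (resp. psi) one variable can be moved from X to Y
   without changing the staging, provided no variable it feeds through G is
   still at X ([staged_flip_phi], [staged_flip_psi]); acyclicity of the
   composite graph always provides such a variable ([movable_variable]), so
   induction on the number of variables at X concludes ([staged_bottom]). *)

From mathcomp Require Import all_boot.
From Stdlib Require Import ProofIrrelevance FunctionalExtensionality.
Set Implicit Arguments. Unset Strict Implicit. Unset Printing Implicit Defensive.

Local Ltac erase_eq_proofs := repeat match goal with e : _ = _ |- _ =>
   (have {e}-> : e = erefl by apply: proof_irrelevance) end.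

Lemma trans_transport (B C : Cat) (a b n : nat) (alpha : 'I_a -> bool)
  (beta : 'I_b -> bool) (F : MFunctor B C alpha) (G : MFunctor B C beta)
  (sigma : 'I_a -> 'I_n) (tau : 'I_b -> 'I_n) (chi : trans F G sigma tau)
  (A1 A2 : 'I_n -> B) (e : A1 = A2) :
  chi A2 = cmp (fmor G (fun j => mcast B (beta j) (f_equal (fun A => A (tau j)) e)))
     (cmp (chi A1) (fmor F (fun j => mcast B (alpha j)
                                 (f_equal (fun A => A (sigma j)) (esym e))))).
Proof.
case: A2 / e => /=.
by rewrite (fmor_id G (fun j => A1 (tau j))) (fmor_id F (fun j => A1 (sigma j)))
  cmp_idl cmp_idr.
Qed.

(* The one-entry instance of [subst_mor]: entry [j] of [subst_mor sg al A i ..]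
   is convertible to [subst_slot A i (sg j) (al j) ..]. *)
Definition subst_slot (B : Cat) (n : nat) (A : 'I_n -> B) (i k : 'I_n)
  (c : bool) (Zs Zt : bool -> B) (u : hom (Zt false) (Zs false))
  (v : hom (Zs true) (Zt true)) :=
  subst_mor (fun _ : 'I_1 => k) (fun _ => c) A i Zs Zt u v ord0.
Arguments subst_slot {B n} A i k c Zs Zt u v.

Section TwoPoints.
Variables (B : Cat) (X Y : B) (f : hom X Y).

(* The poset X <= Y spanned by [f]; [true] names X and [false] names Y. *)
Definition pt (b : bool) : B := if b then X else Y.

Definition pt_mor (b1 b2 : bool) : b2 ==> b1 -> hom (pt b1) (pt b2) :=
  match b1 as x1, b2 as x2 return x2 ==> x1 -> hom (pt x1) (pt x2) with
  | true, true => fun _ => idm X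
  | true, false => fun _ => f
  | false, false => fun _ => idm Y
  | false, true => fun h => False_rect _ (notF h)
  end.

(* A level [(c, s)] stands for the point [pt (lpt (c, s))].  Its object is
   defined by cases so that [lob (c, true)] and [lob (c, false)] reduce to
   [if c then Y else X] and [if c then X else Y], the objects that the
   definition of dinaturality substitutes into a slot of variance [c]. *)
Definition level := (bool * bool)%type.
Definition lpt (p : level) : bool := if p.1 then ~~ p.2 else p.2.
Definition lob (p : level) : B :=
  if p.1 then (if p.2 then Y else X) else (if p.2 then X else Y).

Definition lmor (p1 p2 : level) : lpt p2 ==> lpt p1 -> hom (lob p1) (lob p2).
Proof.
case: p1 => [[] []]; case: p2 => [[] []];
match goal with |- _ -> hom (lob ?q1) (lob ?q2) => exact (@pt_mor (lpt q1) (lpt q2)) end.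
Defined.

(* An arrow [lob p1 -> lob p2] of B^c exists iff [admissible c p1 p2]. *)
Definition admissible (c : bool) (p1 p2 : level) : bool :=
  if c then lpt p2 ==> lpt p1 else lpt p1 ==> lpt p2.

Definition lmmor (c : bool) (p1 p2 : level) :
  admissible c p1 p2 -> mhom B c (lob p1) (lob p2) :=
  match c as c0 return admissible c0 p1 p2 -> mhom B c0 (lob p1) (lob p2) with
  | true => fun h => lmor h
  | false => fun h => lmor h
  end.

(* The levels form a thin category: arrows between them compose uniquely. *)
Lemma lmmor_comp c p1 p2 p3 h1 h2 h3 :
  mcomp (@lmmor c p2 p3 h2) (@lmmor c p1 p2 h1) = @lmmor c p1 p3 h3.
Proof.
move: h1 h2 h3; case: c; case: p1 => [[] []]; case: p2 => [[] []];
  case: p3 => [[] []] => //= *; by rewrite ?cmp_idl ?cmp_idr.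
Qed.

End TwoPoints.

Lemma admissible_refl c p : admissible c p p.
Proof. by case: c; case: p => [[] []]. Qed.
Lemma admissible_src c bl : admissible c (c, false) (bl, false).
Proof. by case: c; case: bl. Qed.
Lemma admissible_tgt c bl : admissible c (bl, false) (c, true).
Proof. by case: c; case: bl. Qed.

Section LevelObjects.
Variables (B : Cat) (X Y : B) (f : hom X Y) (l : nat) (A : 'I_l -> B) (i : 'I_l).

Definition cob (k : 'I_l) (p : level) : B := if k == i then lob X Y p else A k.

(* The canonical arrow between two such objects (identity away from [i]);
   [e] allows the variable to be renamed along an equality. *)
Definition cmor (c : bool) (k1 k2 : 'I_l) (e : k1 = k2) (p1 p2 : level)
  (h : k1 == i -> admissible c p1 p2) : mhom B c (cob k1 p1) (cob k2 p2) :=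
 match e in _ = k2' return mhom B c (cob k1 p1) (cob k2' p2) with
 | erefl => match k1 == i as q return ((q -> admissible c p1 p2) ->
              mhom B c (if q then lob X Y p1 else A k1)
                       (if q then lob X Y p2 else A k1)) with
   | true => fun h => lmmor f (h isT)
   | false => fun _ => mid B c (A k1)
   end h
 end.
Arguments cmor c {k1 k2} e p1 p2 h.

Lemma cmor_comp c k1 k2 k3 (e1 : k1 = k2) (e2 : k2 = k3) (e3 : k1 = k3)
  p1 p2 p3 h1 h2 h3 :
  mcomp (cmor c e2 p2 p3 h2) (cmor c e1 p1 p2 h1) = cmor c e3 p1 p3 h3.
Proof.
case: k2 / e1 e2 h2 => e2 h2; case: k3 / e2 e3 h3 => e3 h3; erase_eq_proofs.
rewrite /cmor /cob /=; move: h1 h2 h3; case: (k1 == i) => h1 h2 h3.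
  exact: lmmor_comp.
by clear h1 h2 h3; case: c; rewrite /= cmp_idl.
Qed.

Definition vcmor (k : nat) (al : 'I_k -> bool) (kk1 kk2 : 'I_k -> 'I_l)
  (ee : forall j, kk1 j = kk2 j) (L1 L2 : 'I_k -> level)
  (hh : forall j, kk1 j == i -> admissible (al j) (L1 j) (L2 j)) :
  vhom al (fun j => cob (kk1 j) (L1 j)) (fun j => cob (kk2 j) (L2 j)) :=
  fun j => cmor (al j) (ee j) (L1 j) (L2 j) (hh j).
Arguments vcmor {k} al {kk1 kk2} ee L1 L2 hh.

Lemma vcmor_comp (C : Cat) k (al : 'I_k -> bool) (Fn : MFunctor B C al) kk1 kk2 kk3
  (e1 : forall j, kk1 j = kk2 j) (e2 : forall j, kk2 j = kk3 j)
  (e3 : forall j, kk1 j = kk3 j) L1 L2 L3 h1 h2 h3 :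
  cmp (fmor Fn (vcmor al e2 L2 L3 h2)) (fmor Fn (vcmor al e1 L1 L2 h1))
  = fmor Fn (vcmor al e3 L1 L3 h3).
Proof.
rewrite -fmor_comp; congr (fmor Fn _); apply: functional_extensionality_dep => j.
exact: cmor_comp.
Qed.

Lemma slot_exit k c bl h hu hv :
  cmor c (erefl k) (bl, false) (c, true) h =
  subst_slot A i k c (fun _ => pt X Y bl) (fun c => if c then Y else X)
    (pt_mor f (b1 := true) (b2 := bl) hu) (pt_mor f (b1 := bl) (b2 := false) hv).
Proof.
by move: h hu hv; rewrite /cmor /subst_slot /subst_mor /cob /=;
  case: (k == i); case: c; case: bl.
Qed.

Lemma slot_entry k c bl h hu hv :
  cmor c (erefl k) (c, false) (bl, false) h =
  subst_slot A i k c (fun c => if c then X else Y) (fun _ => pt X Y bl)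
    (pt_mor f (b1 := bl) (b2 := false) hu) (pt_mor f (b1 := true) (b2 := bl) hv).
Proof.
by move: h hu hv; rewrite /cmor /subst_slot /subst_mor /cob /=;
  case: (k == i); case: c; case: bl.
Qed.

Lemma slot_middle c k1 k2 (e : k1 = k2) bl h :
  cmor c e (bl, false) (bl, false) h = mcast B c (f_equal (substn A i (pt X Y bl)) e).
Proof.
by case: k2 / e; move: h; rewrite /cmor /cob /substn /=;
  case: (k1 == i); case: c; case: bl.
Qed.

End LevelObjects.
Arguments cmor {B X Y} f {l} A i c {k1 k2} e p1 p2 h.
Arguments vcmor {B X Y} f {l} A i {k} al {kk1 kk2} ee L1 L2 hh.

Section DinaturalSides.
Variables (B C : Cat) (a b n : nat) (alpha : 'I_a -> bool) (beta : 'I_b -> bool)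
  (F : MFunctor B C alpha) (G : MFunctor B C beta)
  (sigma : 'I_a -> 'I_n) (tau : 'I_b -> 'I_n) (chi : trans F G sigma tau).

(* The two sides of the dinaturality equation of [chi] in the variable [t]
   at [f : X -> Y]: side [true] passes [chi] through X, side [false] through
   Y, and the arrows in the substituted slots are those of the poset X <= Y. *)
Definition dinat_side (X Y : B) (f : hom X Y) (A : 'I_n -> B) (t : 'I_n)
  (bl : bool) :=
  cmp (fmor G (subst_mor tau beta A t (fun _ => pt X Y bl)
                 (fun c => if c then Y else X)
                 (pt_mor f (implybT bl)) (pt_mor f (b1 := bl) (b2 := false) isT)))
    (cmp (chi (substn A t (pt X Y bl)))
       (fmor F (subst_mor sigma alpha A t (fun c => if c then X else Y)
                 (fun _ => pt X Y bl)
                 (pt_mor f (b1 := bl) (b2 := false) isT) (pt_mor f (implybT bl))))).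

Lemma dinatural_inE t : dinatural_in chi t <->
  forall A X Y (f : hom X Y), dinat_side f A t true = dinat_side f A t false.
Proof. by split=> dn A X Y f; apply: dn. Qed.

End DinaturalSides.

Definition supd (p : nat) (S : 'I_p -> bool) (t : 'I_p) (bl : bool) : 'I_p -> bool :=
  fun k => if k == t then bl else S k.

Section DinaturalityStep.
Variables (B C : Cat) (X Y : B) (f : hom X Y) (l : nat) (A : 'I_l -> B) (i : 'I_l).
Variables (a b n : nat) (alpha : 'I_a -> bool) (beta : 'I_b -> bool)
  (F : MFunctor B C alpha) (G : MFunctor B C beta)
  (sigma : 'I_a -> 'I_n) (tau : 'I_b -> 'I_n) (chi : trans F G sigma tau).
(* Variable [k] of [chi] lies over the variable [ka k] of the composite and,
   when [ka k = i], sits at the level of X <= Y given by the state [S k];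
   [t] is the variable whose level is moved. *)
Variables (ka : 'I_n -> 'I_l) (t : 'I_n) (S : 'I_n -> bool).

Local Notation ob := (cob X Y A i).
Local Notation arr := (cmor f A i).
(* The dinaturality of [chi] in [t] is used at [fZ : Zx -> Zy], which is [f]
   when [ka t = i] and an identity otherwise. *)
Local Notation Zx := (ob (ka t) (true, false)).
Local Notation Zy := (ob (ka t) (false, false)).
Local Notation fZ := (arr true (erefl (ka t)) (true, false) (false, false) (fun _ => isT)).
Local Notation A0 := (fun k => ob (ka k) (S k, false)).

(* The levels of the slots of the target and of the source of [chi] in the
   dinaturality equation for [t]: the substituted levels in the slots of [t],
   the state [S] elsewhere. *)
Definition tgt (k : 'I_n) (c : bool) : level := if k == t then (c, true) else (S k, false).
Definition src (k : 'I_n) (c : bool) : level := if k == t then (c, false) else (S k, false).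

Lemma admissible_entry_src k c : admissible c (c, false) (src k c).
Proof. by rewrite /src; case: (k == t); [apply: admissible_refl | apply: admissible_src]. Qed.
Lemma admissible_src_state k c bl : admissible c (src k c) (supd S t bl k, false).
Proof. by rewrite /src /supd; case: (k == t); [apply: admissible_src | apply: admissible_refl]. Qed.
Lemma admissible_state_tgt k c bl : admissible c (supd S t bl k, false) (tgt k c).
Proof. by rewrite /tgt /supd; case: (k == t); [apply: admissible_tgt | apply: admissible_refl]. Qed.
Lemma admissible_tgt_exit k c : admissible c (tgt k c) (c, true).
Proof. by rewrite /tgt; case: (k == t); [apply: admissible_refl | apply: admissible_tgt]. Qed.

Lemma subst_levels bl :
  substn A0 t (pt Zx Zy bl) = (fun k => ob (ka k) (supd S t bl k, false)).
Proof.
apply: functional_extensionality => k; rewrite /substn /supd.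
by case: eqVneq => [->|//]; case: bl.
Qed.

Local Ltac slot_cases k c bl :=
  rewrite /subst_slot /subst_mor /subst_ob /substn /supd /tgt /src /cmor /cob /=;
  case: (eqVneq k t) => [->|_]; case: (ka _ == i); case: c; case: bl => //=;
  try case: (S _) => //=; move=> *; erase_eq_proofs; rewrite /= ?cmp_idl ?cmp_idr.

Lemma slot_target k c bl h hu hv
  (e1 : substn A0 t (pt Zx Zy bl) k = ob (ka k) (supd S t bl k, false))
  (e2 : subst_ob (fun _ : 'I_1 => k) (fun _ => c) A0 t
          (fun c => if c then Zy else Zx) ord0 = ob (ka k) (tgt k c)) :
  mcomp (arr c (erefl (ka k)) (supd S t bl k, false) (tgt k c) h) (mcast B c e1)
  = mcomp (mcast B c e2) (subst_slot A0 t k c (fun _ => pt Zx Zy bl)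
      (fun c => if c then Zy else Zx)
      (pt_mor fZ (b1 := true) (b2 := bl) hu) (pt_mor fZ (b1 := bl) (b2 := false) hv)).
Proof. by move: h hu hv e1 e2; slot_cases k c bl. Qed.

Lemma slot_source k c bl h hu hv
  (e1 : ob (ka k) (supd S t bl k, false) = substn A0 t (pt Zx Zy bl) k)
  (e2 : ob (ka k) (src k c) = subst_ob (fun _ : 'I_1 => k) (fun _ => c) A0 t
          (fun c => if c then Zx else Zy) ord0) :
  mcomp (mcast B c e1) (arr c (erefl (ka k)) (src k c) (supd S t bl k, false) h)
  = mcomp (subst_slot A0 t k c (fun c => if c then Zx else Zy)
      (fun _ => pt Zx Zy bl)
      (pt_mor fZ (b1 := bl) (b2 := false) hu) (pt_mor fZ (b1 := true) (b2 := bl) hv))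
    (mcast B c e2).
Proof. by move: h hu hv e1 e2; slot_cases k c bl. Qed.

Lemma target_cast j : subst_ob tau beta A0 t (fun c => if c then Zy else Zx) j
  = ob (ka (tau j)) (tgt (tau j) (beta j)).
Proof.
rewrite /subst_ob /tgt /cob; case: (eqVneq (tau j) t) => [->|//].
by case: (ka t == i); case: (beta j).
Qed.

Lemma source_cast j : ob (ka (sigma j)) (src (sigma j) (alpha j))
  = subst_ob sigma alpha A0 t (fun c => if c then Zx else Zy) j.
Proof.
rewrite /subst_ob /src /cob; case: (eqVneq (sigma j) t) => [->|//].
by case: (ka t == i); case: (alpha j).
Qed.

Definition through_level (bl : bool)
  (hG : forall j, ka (tau j) == i ->
          admissible (beta j) (supd S t bl (tau j), false) (tgt (tau j) (beta j)))
  (hF : forall j, ka (sigma j) == i ->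
          admissible (alpha j) (src (sigma j) (alpha j)) (supd S t bl (sigma j), false)) :=
  cmp (fmor G (vcmor f A i beta (fun j => erefl (ka (tau j)))
                 (fun j => (supd S t bl (tau j), false))
                 (fun j => tgt (tau j) (beta j)) hG))
    (cmp (chi (fun k => ob (ka k) (supd S t bl k, false)))
       (fmor F (vcmor f A i alpha (fun j => erefl (ka (sigma j)))
                 (fun j => src (sigma j) (alpha j))
                 (fun j => (supd S t bl (sigma j), false)) hF))).
Arguments through_level : clear implicits.

Lemma through_level_side bl hG hF :
  through_level bl hG hF =
  cmp (fmor G (fun j => mcast B (beta j) (target_cast j)))
    (cmp (dinat_side chi fZ A0 t bl)
       (fmor F (fun j => mcast B (alpha j) (source_cast j)))).
Proof.
rewrite /through_level (trans_transport chi (subst_levels bl)) /dinat_side.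
rewrite !cmp_assoc -!fmor_comp -!cmp_assoc -!fmor_comp.
f_equal; [f_equal | f_equal; f_equal]; apply: functional_extensionality_dep => j.
  exact: slot_target.
exact: slot_source.
Qed.

Lemma through_level_flip (hchi : dinatural_in chi t) hG1 hF1 hG2 hF2 :
  through_level true hG1 hF1 = through_level false hG2 hF2.
Proof.
by rewrite !through_level_side ((dinatural_inE chi t).1 hchi A0 _ _ fZ).
Qed.

End DinaturalityStep.
Arguments through_level {B C X Y} f {l} A i {a b n alpha beta F G sigma tau} chi ka t S bl hG hF.

(* In an acyclic finite relation, every nonempty set [V] of vertices has a
   member from which no member of [V] is reachable by a nonempty path: take
   one with the fewest reachable vertices. *)
Lemma acyclic_far_vertex (T : finType) (e : rel T) (V : pred T) :
  acyclic e -> (exists v, V v) ->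
  exists2 v, V v & forall p w, e v p -> connect e p w -> ~~ V w.
Proof.
move=> hacyc [v0 Vv0].
pose reach v := #|[set w | connect e v w]|.
have exV : exists k, [exists v, V v && (reach v == k)].
  by exists (reach v0); apply/existsP; exists v0; rewrite Vv0 eqxx.
case: (ex_minnP exV) => k /existsP [v /andP[Vv /eqP rv]] kmin.
exists v => // p w evp cpw; apply/negP => Vw.
have le_vw : k <= reach w by apply: kmin; apply/existsP; exists w; rewrite Vw eqxx.
have sub : [set x | connect e w x] \proper [set x | connect e v x].
  apply/properP; split.
    apply/subsetP => x; rewrite !inE => cwx.
    exact: connect_trans (connect_trans (connect1 evp) cpw) cwx.
  exists v; rewrite !inE ?connect0 //.
  by apply/negP => cwv; move: (hacyc _ _ evp); rewrite (connect_trans cpw cwv).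
by move: (proper_card sub); rewrite -/(reach w) -/(reach v) rv ltnNge le_vw.
Qed.

Section Composite.
Variables (B C : Cat) (X Y : B) (f : hom X Y) (l : nat) (A : 'I_l -> B) (i : 'I_l).
Variables (a b cc n m : nat) (alpha : 'I_a -> bool) (beta : 'I_b -> bool)
  (gamma : 'I_cc -> bool) (F : MFunctor B C alpha) (G : MFunctor B C beta)
  (H : MFunctor B C gamma) (sigma : 'I_a -> 'I_n) (tau : 'I_b -> 'I_n)
  (eta : 'I_b -> 'I_m) (theta : 'I_cc -> 'I_m)
  (phi : trans F G sigma tau) (psi : trans G H eta theta)
  (zeta : 'I_n -> 'I_l) (xi : 'I_m -> 'I_l)
  (hcomm : forall j, zeta (tau j) = xi (eta j)).

Local Notation ob := (cob X Y A i).

(* A state puts each variable of phi ([SA]) and of psi ([SB]) lying over [i]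
   at level X ([true]) or Y ([false]); it is coherent when every slot of G
   admits an arrow from the level of its phi-variable to that of its
   psi-variable. *)
Definition coherent (SA : 'I_n -> bool) (SB : 'I_m -> bool) :=
  forall j, zeta (tau j) == i ->
    admissible (beta j) (SA (tau j), false) (SB (eta j), false).

Lemma coherent_const bl : coherent (fun _ => bl) (fun _ => bl).
Proof. by move=> j _; apply: admissible_refl. Qed.

Definition entry_arrow SA :=
  fmor F (vcmor f A i alpha (fun j => erefl (zeta (sigma j)))
    (fun j => (alpha j, false)) (fun j => (SA (sigma j), false))
    (fun j _ => admissible_src (alpha j) (SA (sigma j)))).

Definition exit_arrow SB :=
  fmor H (vcmor f A i gamma (fun j => erefl (xi (theta j)))
    (fun j => (SB (theta j), false)) (fun j => (gamma j, true))
    (fun j _ => admissible_tgt (gamma j) (SB (theta j)))).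

Definition staged SA SB (h : coherent SA SB) :=
  cmp (exit_arrow SB)
   (cmp (psi (fun k => ob (xi k) (SB k, false)))
    (cmp (fmor G (vcmor f A i beta hcomm (fun j => (SA (tau j), false))
                   (fun j => (SB (eta j), false)) h))
     (cmp (phi (fun k => ob (zeta k) (SA k, false))) (entry_arrow SA)))).
Arguments staged : clear implicits.

Lemma staged_ext SA1 SA2 SB1 SB2 h1 h2 :
  SA1 = SA2 -> SB1 = SB2 -> staged SA1 SB1 h1 = staged SA2 SB2 h2.
Proof. by move=> e1 e2; subst; rewrite (proof_irrelevance _ h1 h2). Qed.

Lemma side_as_staged bl :
  dinat_side (vcomp hcomm phi psi) f A i bl = staged _ _ (coherent_const bl).
Proof.
rewrite /dinat_side /staged /vcomp /entry_arrow /exit_arrow -!cmp_assoc.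
f_equal; [f_equal | f_equal; f_equal; [f_equal | f_equal; f_equal]];
  apply: functional_extensionality_dep => j; rewrite /vcmor.
- by symmetry; apply: slot_exit.
- by symmetry; apply: slot_middle.
- by symmetry; apply: slot_entry.
Qed.

Lemma staged_split_phi t SA SB bl h hG hF hout hin :
  staged (supd SA t bl) SB h =
  cmp (exit_arrow SB) (cmp (psi (fun k => ob (xi k) (SB k, false)))
   (cmp (fmor G (vcmor f A i beta hcomm (fun j => tgt t SA (tau j) (beta j))
                  (fun j => (SB (eta j), false)) hout))
    (cmp (through_level f A i phi zeta t SA bl hG hF)
     (fmor F (vcmor f A i alpha (fun j => erefl (zeta (sigma j)))
               (fun j => (alpha j, false)) (fun j => src t SA (sigma j) (alpha j))
               hin))))).
Proof.
rewrite /staged /through_level /entry_arrow.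
rewrite -(vcmor_comp f A G _ _ hcomm hG hout h).
rewrite -(vcmor_comp f A F _ _ (fun j => erefl) hin hF
  (fun j _ => admissible_src (alpha j) (supd SA t bl (sigma j)))).
by rewrite -!cmp_assoc.
Qed.

Lemma staged_split_psi s SA SB bl h hG hF hout hin :
  staged SA (supd SB s bl) h =
  cmp (fmor H (vcmor f A i gamma (fun j => erefl (xi (theta j)))
                 (fun j => tgt s SB (theta j) (gamma j)) (fun j => (gamma j, true)) hout))
   (cmp (through_level f A i psi xi s SB bl hG hF)
    (cmp (fmor G (vcmor f A i beta hcomm (fun j => (SA (tau j), false))
                   (fun j => src s SB (eta j) (beta j)) hin))
     (cmp (phi (fun k => ob (zeta k) (SA k, false))) (entry_arrow SA)))).
Proof.
rewrite /staged /through_level /exit_arrow.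
rewrite -(vcmor_comp f A H _ _ (fun j => erefl) hG hout
  (fun j _ => admissible_tgt (gamma j) (supd SB s bl (theta j)))).
rewrite -(vcmor_comp f A G _ _ hcomm hin hF h).
by rewrite -!cmp_assoc.
Qed.

Hypotheses (hphi : dinatural phi) (hpsi : dinatural psi).

Lemma coherent_flip_phi t SA SB :
  (forall j, tau j = t -> beta j -> SB (eta j) = false) ->
  coherent SA SB -> coherent (supd SA t false) SB.
Proof.
move=> hmax h j hj; have := h j hj; rewrite /supd.
case: (eqVneq (tau j) t) => [E|_] //= _.
by move: (hmax j E); case: (beta j) => //= ->.
Qed.

(* Moving such a [t] to Y leaves the staging unchanged: factor it through
   the step of phi at [t] and apply the dinaturality of phi in [t]. *)
Lemma staged_flip_phi t (SA : 'I_n -> bool) SB (St : SA t)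
  (hmax : forall j, tau j = t -> beta j -> SB (eta j) = false) h :
  staged SA SB h = staged (supd SA t false) SB (coherent_flip_phi hmax h).
Proof.
have eSA : SA = supd SA t true.
  by apply: functional_extensionality => k; rewrite /supd; case: eqVneq => [->|].
have h1 : coherent (supd SA t true) SB by rewrite -eSA.
rewrite (staged_ext h h1 eSA erefl).
have hout j : zeta (tau j) == i ->
    admissible (beta j) (tgt t SA (tau j) (beta j)) (SB (eta j), false).
  move=> hj; have := h1 j hj; rewrite /tgt /supd.
  case: (eqVneq (tau j) t) => [E|_] //=.
  by move: (hmax j E); case: (beta j) => //= ->.
pose hin j (_ : zeta (sigma j) == i) := admissible_entry_src t SA (sigma j) (alpha j).
pose hF bl j (_ : zeta (sigma j) == i) := admissible_src_state t SA (sigma j) (alpha j) bl.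
pose hG bl j (_ : zeta (tau j) == i) := admissible_state_tgt t SA (tau j) (beta j) bl.
rewrite (staged_split_phi h1 (hG true) (hF true) hout hin).
rewrite (staged_split_phi (coherent_flip_phi hmax h) (hG false) (hF false) hout hin).
by rewrite (through_level_flip f A (hphi t) _ _ (hG false) (hF false)).
Qed.

Lemma coherent_flip_psi s SA SB :
  (forall j, eta j = s -> ~~ beta j -> SA (tau j) = false) ->
  coherent SA SB -> coherent SA (supd SB s false).
Proof.
move=> hmax h j hj; have := h j hj; rewrite /supd.
case: (eqVneq (eta j) s) => [E|_] //= _.
by move: (hmax j E); case: (beta j) => //= ->.
Qed.

Lemma staged_flip_psi s SA (SB : 'I_m -> bool) (Ss : SB s)
  (hmax : forall j, eta j = s -> ~~ beta j -> SA (tau j) = false) h :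
  staged SA SB h = staged SA (supd SB s false) (coherent_flip_psi hmax h).
Proof.
have eSB : SB = supd SB s true.
  by apply: functional_extensionality => k; rewrite /supd; case: eqVneq => [->|].
have h1 : coherent SA (supd SB s true) by rewrite -eSB.
rewrite (staged_ext h h1 erefl eSB).
have hin j : zeta (tau j) == i ->
    admissible (beta j) (SA (tau j), false) (src s SB (eta j) (beta j)).
  move=> hj; have := h1 j hj; rewrite /src /supd.
  case: (eqVneq (eta j) s) => [E|_] //=.
  by move: (hmax j E); case: (beta j) => //= ->.
pose hout j (_ : xi (theta j) == i) := admissible_tgt_exit s SB (theta j) (gamma j).
pose hF bl j (_ : xi (eta j) == i) := admissible_src_state s SB (eta j) (beta j) bl.
pose hG bl j (_ : xi (theta j) == i) := admissible_state_tgt s SB (theta j) (gamma j) bl.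
rewrite (staged_split_psi h1 (hG true) (hF true) hout hin).
rewrite (staged_split_psi (coherent_flip_psi hmax h) (hG false) (hF false) hout hin).
by rewrite (through_level_flip f A (hpsi s) _ _ (hG false) (hF false)).
Qed.

Hypothesis hacyc : acyclic (cg_edge alpha beta gamma sigma tau eta theta).

Lemma movable_variable (SA : 'I_n -> bool) (SB : 'I_m -> bool) :
  (exists t, SA t) \/ (exists s, SB s) ->
  (exists2 t, SA t & forall j, tau j = t -> beta j -> SB (eta j) = false) \/
  (exists2 s, SB s & forall j, eta j = s -> ~~ beta j -> SA (tau j) = false).
Proof.
move=> hex.
pose V (v : cg_vertex a b cc n m) :=
  match v with inr (inl t) => SA t | inr (inr s) => SB s | _ => false end.
have [v Vv far] : exists2 v, V v & forall p w,
    cg_edge alpha beta gamma sigma tau eta theta v p ->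
    connect (cg_edge alpha beta gamma sigma tau eta theta) p w -> ~~ V w.
  by apply: acyclic_far_vertex => //; case: hex => [[t St]|[s Ss]];
    [exists (inr (inl t)) | exists (inr (inr s))].
case: v Vv far => [[[]|]|[t|s]] //= Vv far; [left; exists t | right; exists s] => //
  j E bj; apply/negbTE.
- apply: (far (inl (inl (inr j))) (inr (inr (eta j)))).
    by rewrite /= E eqxx bj.
  by apply: connect1; rewrite /= eqxx bj.
- apply: (far (inl (inl (inr j))) (inr (inl (tau j)))).
    by rewrite /= E eqxx bj.
  by apply: connect1; rewrite /= eqxx bj.
Qed.

Lemma card_supd (p : nat) (S : 'I_p -> bool) t : S t ->
  #|[pred k | S k]| = (#|[pred k | supd S t false k]|).+1.
Proof.
move=> St; rewrite (cardD1 t) inE St add1n; congr (_.+1).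
by apply: eq_card => k; rewrite !inE /supd; case: eqVneq.
Qed.

Lemma staged_bottom N : forall SA SB (h : coherent SA SB),
  #|[pred t | SA t]| + #|[pred s | SB s]| = N -> staged SA SB h = staged _ _ (coherent_const false).
Proof.
elim: N => [|N IH] SA SB h hN.
  move/eqP: hN; rewrite addn_eq0 => /andP[/eqP hA /eqP hB].
  apply: staged_ext; apply: functional_extensionality => k; apply/negP => Sk.
    by move: hA; rewrite (cardD1 k) inE Sk.
  by move: hB; rewrite (cardD1 k) inE Sk.
have hex : (exists t, SA t) \/ (exists s, SB s).
  case: (pickP [pred t | SA t]) => [t St|A0]; first by left; exists t.
  case: (pickP [pred s | SB s]) => [s Ss|B0]; first by right; exists s.
  by move: hN; rewrite (eq_card0 A0) (eq_card0 B0).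
case: (movable_variable hex) => [[t St hmax]|[s Ss hmax]].
  rewrite (staged_flip_phi St hmax h); apply: IH.
  by move: hN; rewrite (card_supd St) addSn => -[].
rewrite (staged_flip_psi Ss hmax h); apply: IH.
by move: hN; rewrite (card_supd Ss) addnS => -[].
Qed.

End Composite.

Theorem mainTheorem4 (B C : Cat) (a b c n m : nat)
  (alpha : 'I_a -> bool) (beta : 'I_b -> bool) (gamma : 'I_c -> bool)
  (F : MFunctor B C alpha) (G : MFunctor B C beta) (H : MFunctor B C gamma)
  (sigma : 'I_a -> 'I_n) (tau : 'I_b -> 'I_n)
  (eta : 'I_b -> 'I_m) (theta : 'I_c -> 'I_m)
  (phi : trans F G sigma tau) (psi : trans G H eta theta)
  (hphi : dinatural phi) (hpsi : dinatural psi)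
  (hacyc : acyclic (cg_edge alpha beta gamma sigma tau eta theta))
  (l : nat) (zeta : 'I_n -> 'I_l) (xi : 'I_m -> 'I_l)
  (hpo : isPushout tau eta zeta xi) :
  dinatural (vcomp (po_comm hpo) phi psi).
Proof.
move=> i; apply/dinatural_inE => A X Y f.
rewrite !side_as_staged.
by rewrite (staged_bottom f A _ hphi hpsi hacyc _ erefl).
Qed.
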